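(* Let $G$ be a group equipped with a proper left-invariant metric $d_G$ (bounded sets are finite). Suppose $G$ is locally finite. Then the following are equivalent: (a) $\mathrm{dim}_{AN}(G,d_G)=0$; (b) there is a constant $c>0$ such that for each $r>0$ the subgroup of $G$ generated by the open ball $B(1,r)$ is contained in $B(1,c\cdot r)$.
   Context: A group is locally finite if every finitely generated subgroup is finite. For a metric space $X$, $r>0$: an $r$-path is a sequence $x_0,\dots,x_m$ with $d(x_j,x_{j+1})<r$; two points of $Y\subseteq X$ lie in the same $r$-component of $Y$ if joined by an $r$-path in $Y$. An $n$-dimensional control function of $X$ is $D:\mathbb{R}_+\to\mathbb{R}_+\cup\{\infty\}$ such that for each $r>0$ there is a cover $\{X_0,\dots,X_n\}$ of $X$ such that every open ball $B(x,r)$ lies in some $X_i$ and every $r$-component of each $X_i$ has diameter at most $D(r)$. $\mathrm{dim}_{AN}(X)$ is the smallest $n$ such that $X$ has an $n$-dimensional control function of the form $D(r)=Cr$ for some $C>0$. *)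

From Stdlib Require Import Reals List.
From Coquelicot Require Import Rbar.
Open Scope R_scope.

Record Group := {
  gcar :> Type;
  gmul : gcar -> gcar -> gcar;
  ginv : gcar -> gcar;
  gone : gcar;
  gmulA : forall x y z, gmul x (gmul y z) = gmul (gmul x y) z;
  gmul1l : forall x, gmul gone x = x;
  gmulVl : forall x, gmul (ginv x) x = gone
}.

Inductive gen (G : Group) (S : G -> Prop) : G -> Prop :=
  | gen_base : forall x, S x -> gen G S x
  | gen_one : gen G S (gone G)
  | gen_mul : forall x y, gen G S x -> gen G S y -> gen G S (gmul G x y)
  | gen_inv : forall x, gen G S x -> gen G S (ginv G x).

Definition finite_set {T : Type} (S : T -> Prop) : Prop :=
  exists l : list T, forall x, S x -> In x l.

Definition locally_finite (G : Group) : Prop :=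
  forall l : list G, finite_set (gen G (fun x => In x l)).

Definition is_metric {X : Type} (d : X -> X -> R) : Prop :=
  (forall x y, 0 <= d x y) /\
  (forall x y, d x y = 0 <-> x = y) /\
  (forall x y, d x y = d y x) /\
  (forall x y z, d x z <= d x y + d y z).

Definition left_invariant (G : Group) (d : G -> G -> R) : Prop :=
  forall g x y, d (gmul G g x) (gmul G g y) = d x y.

Definition proper_metric {X : Type} (d : X -> X -> R) : Prop :=
  forall (S : X -> Prop) (x0 : X) (b : R),
    (forall y, S y -> d x0 y <= b) -> finite_set S.

(** [rchain d Y r x y]: x and y are joined by an r-path lying in Y, i.e.
    they lie in the same r-component of Y. *)
Inductive rchain {X : Type} (d : X -> X -> R) (Y : X -> Prop) (r : R)
  : X -> X -> Prop :=
  | rchain_refl : forall x, Y x -> rchain d Y r x x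
  | rchain_step : forall x z y, Y x -> d x z < r -> rchain d Y r z y ->
      rchain d Y r x y.

(** [D] is an n-dimensional control function of (X,d): for each r > 0 there is
    a cover X_0, ..., X_n such that every open ball B(x,r) lies in some X_i and
    every r-component of each X_i has diameter at most D(r). *)
Definition control_function {X : Type} (d : X -> X -> R) (n : nat)
    (D : R -> Rbar) : Prop :=
  forall r, 0 < r ->
    exists Xs : nat -> X -> Prop,
      (forall x, exists i, (i <= n)%nat /\ Xs i x) /\
      (forall x, exists i, (i <= n)%nat /\ forall y, d x y < r -> Xs i y) /\
      (forall i, (i <= n)%nat -> forall x y, rchain d (Xs i) r x y ->
         Rbar_le (Finite (d x y)) (D r)).

Definition has_linear_control {X : Type} (d : X -> X -> R) (n : nat) : Prop :=
  exists C, 0 < C /\ control_function d n (fun r => Finite (C * r)).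

Definition dim_AN_eq {X : Type} (d : X -> X -> R) (n : nat) : Prop :=
  has_linear_control d n /\ forall m, (m < n)%nat -> ~ has_linear_control d m.

(* A 0-dimensional cover for scale r consists of a single set, which must be
   all of G, so dim_AN(G) = 0 says exactly that the r-components of G have
   diameter at most C r. By left invariance, x and y lie in the same
   r-component iff x^-1 y lies in the subgroup generated by B(1, r), and
   d(x, y) = d(1, x^-1 y); so both conditions bound the same quantity. *)

From Stdlib Require Import Reals Lra Lia.
From Coquelicot Require Import Rbar.
Open Scope R_scope.

Lemma gmulVr (G : Group) (x : G) : gmul G x (ginv G x) = gone G.
Proof.
  assert (Hidem : gmul G (gmul G x (ginv G x)) (gmul G x (ginv G x))
                  = gmul G x (ginv G x)).
  { rewrite <- gmulA, (gmulA G (ginv G x)), gmulVl, gmul1l. reflexivity. }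
  set (e := gmul G x (ginv G x)) in *.
  rewrite <- (gmul1l G e), <- (gmulVl G e) at 1.
  rewrite <- gmulA, Hidem. apply gmulVl.
Qed.

Lemma gmul1r (G : Group) (x : G) : gmul G x (gone G) = x.
Proof. rewrite <- (gmulVl G x), gmulA, gmulVr. apply gmul1l. Qed.

Lemma gmulKV (G : Group) (x y : G) : gmul G x (gmul G (ginv G x) y) = y.
Proof. rewrite gmulA, gmulVr. apply gmul1l. Qed.

Definition full {X : Type} : X -> Prop := fun _ => True.

Section Chains.
Variables (X : Type) (d : X -> X -> R) (r : R).

Lemma rchain_trans (Y : X -> Prop) x y z :
  rchain d Y r x y -> rchain d Y r y z -> rchain d Y r x z.
Proof. induction 1; intros; [assumption | eapply rchain_step; eauto]. Qed.

Lemma rchain_sub (Y Y' : X -> Prop) x y :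
  (forall z, Y z -> Y' z) -> rchain d Y r x y -> rchain d Y' r x y.
Proof.
  intros HYY'. induction 1; [apply rchain_refl | eapply rchain_step]; eauto.
Qed.

Lemma rchain_sym x y :
  (forall u v, d u v = d v u) -> rchain d full r x y -> rchain d full r y x.
Proof.
  intros hsym. induction 1 as [x | x z y _ Hxz _ IH].
  - apply rchain_refl; exact I.
  - apply rchain_trans with z; [exact IH |].
    apply rchain_step with x; [exact I | rewrite hsym; exact Hxz |].
    apply rchain_refl; exact I.
Qed.

End Chains.

Lemma control_function0 {X : Type} (d : X -> X -> R) (D : R -> Rbar) :
  (forall x, d x x = 0) ->
  control_function d 0 D <->
  forall r, 0 < r -> forall x y, rchain d full r x y -> Rbar_le (d x y) (D r).
Proof.
  intros hdiag. split.
  - intros Hctl s Hs x y Hxy.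
    destruct (Hctl s Hs) as [Xs [_ [Hball Hdiam]]].
    assert (Hcover : forall z, Xs 0%nat z).
    { intros z. destruct (Hball z) as [i [Hi Hz]].
      replace 0%nat with i by lia. apply Hz. rewrite hdiag. exact Hs. }
    apply (Hdiam 0%nat (le_n 0)).
    apply rchain_sub with full; [intros; apply Hcover | exact Hxy].
  - intros Hbound s Hs. exists (fun _ => full).
    split; [| split]; intros.
    + exists 0%nat. split; [lia | exact I].
    + exists 0%nat. split; [lia | intros; exact I].
    + apply Hbound; assumption.
Qed.

Lemma dim_AN_eq0 {X : Type} (d : X -> X -> R) :
  dim_AN_eq d 0 <-> has_linear_control d 0.
Proof. split; [intros [H _] | intros H; split; [| intros m Hm; lia]]; exact H. Qed.

Section LeftInvariant.
Variables (G : Group) (d : G -> G -> R).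
Hypothesis hinv : left_invariant G d.

Definition gen_ball (r : R) : G -> Prop := gen G (fun x => d (gone G) x < r).

Lemma dist_ginvl x y : d x y = d (gone G) (gmul G (ginv G x) y).
Proof. rewrite <- (hinv x (gone G)), gmul1r, gmulKV. reflexivity. Qed.

Lemma rchain_mull r g x y :
  rchain d full r x y -> rchain d full r (gmul G g x) (gmul G g y).
Proof.
  induction 1 as [x | x z y _ Hxz _ IH].
  - apply rchain_refl; exact I.
  - apply rchain_step with (gmul G g z); [exact I | rewrite hinv; exact Hxz | exact IH].
Qed.

Lemma rchain_gen_ball (Y : G -> Prop) r x y :
  rchain d Y r x y -> gen_ball r (gmul G (ginv G x) y).
Proof.
  induction 1 as [x | x z y _ Hxz _ IH].
  - rewrite gmulVl. apply gen_one.
    replace (gmul G (ginv G x) y)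
      with (gmul G (gmul G (ginv G x) z) (gmul G (ginv G z) y)).
    + apply gen_mul; [apply gen_base | exact IH].
      rewrite <- dist_ginvl. exact Hxz.
    + rewrite <- gmulA, gmulKV. reflexivity.
Qed.

Lemma gen_ball_rchain r g :
  (forall x y, d x y = d y x) ->
  gen_ball r g -> rchain d full r (gone G) g.
Proof.
  intros hsym. induction 1 as [g Hg | | x y _ IHx _ IHy | x _ IH].
  - apply rchain_step with g; [exact I | exact Hg |]. apply rchain_refl; exact I.
  - apply rchain_refl; exact I.
  - apply rchain_trans with x; [exact IHx |].
    rewrite <- (gmul1r G x) at 1. apply rchain_mull, IHy.
  - apply rchain_sym; [exact hsym |].
    rewrite <- (gmulVl G x), <- (gmul1r G (ginv G x)) at 1.
    apply rchain_mull, IH.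
Qed.

End LeftInvariant.

Theorem proposition2p1 (G : Group) (d : G -> G -> R)
  (hmetric : is_metric d) (hinv : left_invariant G d) (hprop : proper_metric d)
  (hlf : locally_finite G) :
  dim_AN_eq d 0 <->
  exists c, 0 < c /\
    forall r, 0 < r ->
      forall g, gen G (fun x => d (gone G) x < r) g -> d (gone G) g < c * r.
Proof.
  destruct hmetric as [_ [hzero [hsym _]]].
  assert (hdiag : forall x, d x x = 0) by (intros x; apply hzero; reflexivity).
  rewrite dim_AN_eq0. split.
  - intros [C [HC Hctl]]. exists (2 * C). split; [lra |].
    intros r Hr g Hg.
    pose proof (proj1 (control_function0 d _ hdiag) Hctl r Hr _ _
                  (gen_ball_rchain G d hinv r g hsym Hg)) as Hbound.
    simpl in Hbound. nra.
  - intros [c [Hc Hgen]]. exists c. split; [exact Hc |].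
    apply control_function0; [exact hdiag |].
    intros r Hr x y Hxy. simpl. rewrite (dist_ginvl G d hinv).
    apply Rlt_le, Hgen; [exact Hr | exact (rchain_gen_ball G d hinv _ _ _ _ Hxy)].
Qed.
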